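(* Let $n\ge1$ and $R=\mathbb{C}[x_{ij}:1\le i<j\le n+1]$. Let $X$ be the strictly upper triangular $(n+1)\times(n+1)$ matrix with $(i,j)$-entry $x_{ij}$ for $i<j$ and $0$ otherwise. Then the set of $2\times2$ minors of $X$ is a Gröbner basis of the ideal it generates with respect to the degree reverse lexicographic order induced by any total order of the variables.
   Context: Degree revlex order (for variables ordered $x_1>\dots>x_N$): $x^a>x^b$ if $\sum a_i>\sum b_i$, or the degrees are equal and the rightmost nonzero entry of $a-b$ is negative. *)

From mathcomp Require Import all_boot all_order all_algebra all_fingroup.
From mathcomp Require Import Rstruct.
From mathcomp Require Import complex.
From mathcomp.multinomials Require Import mpoly.
From Stdlib Require Reals.

Set Implicit Arguments.
Unset Strict Implicit.
Unset Printing Implicit Defensive.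

Import Order.TTheory GRing.Theory Num.Theory.
Local Open Scope ring_scope.

Definition Cfield : fieldType := complex Reals.Rdefinitions.R.

(** Degree reverse lexicographic order on monomials in N variables, for the
    variable order  x_(s 0) > x_(s 1) > ... > x_(s (N-1)), where the
    permutation s encodes an arbitrary total order of the variables.
    [drl_lt s a b] means  x^a < x^b  : either deg a < deg b, or the degrees are
    equal and the rightmost (w.r.t. the variable order) nonzero entry of
    b - a is negative. *)
Definition drl_lt (N : nat) (s : {perm 'I_N}) (a b : 'X_{1..N}) : Prop :=
  (mdeg a < mdeg b)%N \/
  (mdeg a = mdeg b /\
   exists k : 'I_N, (b (s k) < a (s k))%N /\
     forall l : 'I_N, (k < l)%N -> a (s l) = b (s l)).

Definition is_lead_mon (K : fieldType) (N : nat) (s : {perm 'I_N})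
    (f : {mpoly K[N]}) (m : 'X_{1..N}) : Prop :=
  m \in msupp f /\ forall m', m' \in msupp f -> m' != m -> drl_lt s m' m.

Definition ideal_gen (K : fieldType) (N : nat) (G : {mpoly K[N]} -> Prop)
    (f : {mpoly K[N]}) : Prop :=
  exists q : seq ({mpoly K[N]} * {mpoly K[N]}),
    (forall c, c \in q -> G c.2) /\ f = \sum_(c <- q) c.1 * c.2.

Definition groebner_basis (K : fieldType) (N : nat) (s : {perm 'I_N})
    (G I : {mpoly K[N]} -> Prop) : Prop :=
  (forall g, G g -> I g) /\
  forall f, I f -> f != 0 ->
    exists g mf mg, [/\ G g, is_lead_mon s f mf, is_lead_mon s g mg
                      & (mg <= mf)%MM].

(** Variables x_ij, 1 <= i < j <= n+1 (0-based: i < j in 'I_n.+1). *)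
Definition VarIdx (n : nat) := {p : 'I_n.+1 * 'I_n.+1 | (p.1 < p.2)%N}.
Definition nvars (n : nat) : nat := #|{: VarIdx n}|.

Definition Rpoly (n : nat) := {mpoly Cfield[nvars n]}.

Definition xvar (n : nat) (p : VarIdx n) : Rpoly n := 'X_(enum_rank p).

Definition Xent (n : nat) (i j : 'I_n.+1) : Rpoly n :=
  if insub (i, j) is Some p then xvar p else 0.

Definition minor2 (n : nat) (i1 i2 j1 j2 : 'I_n.+1) : Rpoly n :=
  Xent i1 j1 * Xent i2 j2 - Xent i1 j2 * Xent i2 j1.

Definition is_minor2 (n : nat) (g : Rpoly n) : Prop :=
  exists i1 i2 j1 j2 : 'I_n.+1,
    [/\ (i1 < i2)%N, (j1 < j2)%N & g = minor2 i1 i2 j1 j2].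

From mathcomp Require Import all_boot all_order all_algebra all_fingroup.
From mathcomp.multinomials Require Import mpoly.

Set Implicit Arguments.
Unset Strict Implicit.
Unset Printing Implicit Defensive.

Import Order.TTheory GRing.Theory Num.Theory.
Local Open Scope ring_scope.

(* The ring map sending x_ij to y_i z_j kills every minor whose four entries
   are variables; the other minors are monomials x_(i1 j1) x_(i2 j2) with
   j1 <= i2. Let mf be the leading monomial of a nonzero f in the ideal. If
   the image of mf contains some y_i z_j with j <= i, then mf is divisible by
   such a monomial minor. Otherwise every element of the ideal has coefficient
   zero on the image of mf, so f has another monomial m' < mf with the same
   image. At the last variable x_pq in which m' and mf differ, mf has the
   smaller exponent; comparing the exponents of row p and of column q yields
   variables x_pb and x_aq of mf that come before x_pq, and since y_a z_b
   divides the image of mf, a < b and x_ab is a variable. Then x_pb x_aq is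
   the leading term of the minor on rows p, a and columns b, q: the last of
   its four variables is x_pq or x_ab. *)

Lemma sum_nat_gt0P (I : finType) (P : pred I) (F : I -> nat) :
  reflect (exists2 k, P k & 0 < F k)%N (0 < \sum_(k | P k) F k)%N.
Proof.
rewrite lt0n sum_nat_eq0; apply: (iffP forallPn) => [[k]|[k Pk Fk]].
  by rewrite negb_imply -lt0n => /andP[Pk Fk]; exists k.
by exists k; rewrite negb_imply Pk -lt0n.
Qed.

Lemma eq_sum_nat_exists_gt (I : finType) (P : pred I) (F G : I -> nat) v :
  (\sum_(k | P k) F k = \sum_(k | P k) G k)%N -> P v -> (F v < G v)%N ->
  exists2 k, P k & (G k < F k)%N.
Proof.
move=> eqFG Pv ltv.
case: (boolP [exists k, P k && (G k < F k)%N]) => [/existsP[k /andP[]]|/existsPn leGF].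
  by exists k.
have : (\sum_(k | P k) F k < \sum_(k | P k) G k)%N.
  rewrite (bigD1 v Pv) /= (bigD1 v Pv) /= -addSn leq_add //.
  by apply: leq_sum => k /andP[Pk _]; rewrite leqNgt; have := leGF k; rewrite Pk.
by rewrite eqFG ltnn.
Qed.

Lemma lem_addU N (m : 'X_{1..N}) (k1 k2 : 'I_N) :
  k1 != k2 -> (0 < m k1)%N -> (0 < m k2)%N -> (U_(k1) + U_(k2) <= m)%MM.
Proof.
move=> ne12 pos1 pos2; apply/mnm_lepP => x; rewrite mnmDE !mnm1E.
case: (eqVneq k1 x) => [eq1|_]; case: (eqVneq k2 x) => [eq2|_] //=.
- by move: ne12; rewrite eq1 eq2 eqxx.
- by rewrite -eq1.
- by rewrite -eq2.
Qed.

Lemma mcoeffMX_eq0 (R : nzRingType) N (p : {mpoly R[N]}) (u m : 'X_{1..N}) :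
  ~~ (u <= m)%MM -> (p * 'X_[u])@_m = 0.
Proof.
apply: contraNeq; rewrite -mcoeff_msupp (perm_mem (msuppMX p u)).
by case/mapP=> m' _ ->; apply/mnm_lepP => i; rewrite mnmDE leq_addr.
Qed.

Section DegRevLex.

Variables (N : nat) (s : {perm 'I_N}).
Implicit Types (a b c : 'X_{1..N}).

Lemma drl_lt_asym a b : drl_lt s a b -> ~ drl_lt s b a.
Proof.
case=> [ltab|[eqab [k1 [lt1 eq1]]]] [ltba|[eqba [k2 [lt2 eq2]]]].
- by move: (ltn_trans ltab ltba); rewrite ltnn.
- by move: ltab; rewrite eqba ltnn.
- by move: ltba; rewrite eqab ltnn.
case: (ltngtP k1 k2) => [lt12|lt21|/val_inj eq12].
- by move: lt2; rewrite eq1 // ltnn.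
- by move: lt1; rewrite eq2 // ltnn.
- by subst k2; move: (ltn_trans lt1 lt2); rewrite ltnn.
Qed.

Lemma drl_lt_trans a b c : drl_lt s a b -> drl_lt s b c -> drl_lt s a c.
Proof.
case=> [ltab|[eqab [k1 [lt1 eq1]]]] [ltbc|[eqbc [k2 [lt2 eq2]]]].
- by left; apply: ltn_trans ltbc.
- by left; rewrite -eqbc.
- by left; rewrite eqab.
right; split; first by rewrite eqab.
have eq12 (l : 'I_N) : (maxn k1 k2 < l)%N -> a (s l) = c (s l).
  by rewrite gtn_max => /andP[l1 l2]; rewrite eq1 ?eq2.
case: (ltngtP k1 k2) => [lt12|lt21|/val_inj e12].
- by exists k2; split=> [|l ?]; [rewrite eq1 | apply: eq12; rewrite (maxn_idPr (ltnW lt12))].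
- by exists k1; split=> [|l ?]; [rewrite -eq2 | apply: eq12; rewrite (maxn_idPl (ltnW lt21))].
- by subst k2; exists k1; split=> [|l ?]; [apply: ltn_trans lt1 | apply: eq12; rewrite maxnn].
Qed.

Lemma drl_lt_total a b : a != b -> drl_lt s a b \/ drl_lt s b a.
Proof.
move=> neab; case: (ltngtP (mdeg a) (mdeg b)) => [lt|gt|eqdeg].
- by left; left.
- by right; left.
have [i neq_i] : exists i, a i != b i.
  apply/existsP; apply: contraR neab => /existsPn eq_ab.
  by apply/eqP/mnmP => i; apply/eqP/negbNE.
have neq_t0 : a (s (s^-1 i)%g) != b (s (s^-1 i)%g) by rewrite permKV.
have [t neq_t max_t] := arg_maxnP (P := fun u => a (s u) != b (s u)) (@nat_of_ord N) neq_t0.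
have eq_after (l : 'I_N) : (t < l)%N -> a (s l) = b (s l).
  by move=> lt_tl; apply/eqP; apply: contraTT lt_tl => /max_t; rewrite -leqNgt.
case: (ltngtP (a (s t)) (b (s t))) => [lt|gt|eq].
- by right; right; split=> //; exists t; split=> // l /eq_after.
- by left; right; split=> //; exists t.
- by move: neq_t; rewrite eq eqxx.
Qed.

Lemma exists_drl_max (r : seq 'X_{1..N}) : r != [::] ->
  exists2 m, m \in r & forall m', m' \in r -> m' != m -> drl_lt s m' m.
Proof.
elim: r => // x r IH _; case: (eqVneq r [::]) => [->|/IH[m mr max_m]].
  by exists x; rewrite ?mem_seq1 // => m'; rewrite mem_seq1 => ->.
case: (eqVneq x m) => [->|/drl_lt_total[ltxm|ltmx]].
- exists m; first by rewrite inE mr orbT.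
  by move=> m'; rewrite inE => /predU1P[->|/max_m]; rewrite ?eqxx.
- exists m; first by rewrite inE mr orbT.
  by move=> m'; rewrite inE => /predU1P[-> _|/max_m].
- exists x; first by rewrite inE eqxx.
  move=> m'; rewrite inE => /predU1P[->|m'r]; first by rewrite eqxx.
  by move=> _; case: (eqVneq m' m) => [->//|/(max_m _ m'r)/drl_lt_trans]; apply.
Qed.

Lemma exists_lead_mon (K : fieldType) (f : {mpoly K[N]}) :
  f != 0 -> exists m, is_lead_mon s f m.
Proof. by rewrite -msupp_eq0 => /exists_drl_max[m fm max_m]; exists m. Qed.

Lemma is_lead_monN (K : fieldType) (f : {mpoly K[N]}) m :
  is_lead_mon s f m -> is_lead_mon s (- f) m.
Proof. by case=> fm max_m; split=> [|m']; rewrite (perm_mem (msuppN f)) //; apply: max_m. Qed.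

Lemma is_lead_monX (K : fieldType) m : is_lead_mon s ('X_[m] : {mpoly K[N]}) m.
Proof. by split=> [|m']; rewrite msuppX mem_seq1 // => /eqP->; rewrite eqxx. Qed.

Lemma is_lead_monXB (K : fieldType) a b :
  drl_lt s b a -> is_lead_mon s ('X_[a] - 'X_[b] : {mpoly K[N]}) a.
Proof.
move=> ltba; have neab : a != b.
  by apply: contraPneq (drl_lt_asym ltba) => eqab; rewrite eqab in ltba *.
have suppE m : (m \in msupp ('X_[a] - 'X_[b] : {mpoly K[N]})) = (m == a) || (m == b).
  rewrite mcoeff_msupp mcoeffB !mcoeffX.
  case: (eqVneq m a) => [->|_].
    by rewrite [b == a]eq_sym (negbTE neab) subr0 oner_eq0.
  by case: (eqVneq m b) => _; rewrite ?sub0r ?oppr_eq0 ?oner_eq0 ?subrr ?eqxx.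
by split=> [|m']; rewrite suppE ?eqxx // => /predU1P[->|/eqP->]; rewrite ?eqxx.
Qed.

Lemma drl_lt_exchange (x y z c : 'I_N) :
  x != c -> y != c -> z != c -> ((s^-1)%g x <= (s^-1)%g c)%N ->
  ((s^-1)%g y <= (s^-1)%g c)%N -> ((s^-1)%g z <= (s^-1)%g c)%N ->
  drl_lt s (U_(c) + U_(z))%MM (U_(x) + U_(y))%MM.
Proof.
move=> nx ny nz lex ley lez; right; split; first by rewrite !mdegD !mdeg1.
exists (s^-1 c)%g; rewrite permKV; split.
  by rewrite !mnmDE !mnm1E (negbTE nx) (negbTE ny) eqxx.
have ne_later (w l : 'I_N) :
    ((s^-1)%g w <= (s^-1)%g c)%N -> ((s^-1)%g c < l)%N -> (w == s l) = false.
  by move=> lew ltl; apply: contraTF lew => /eqP->; rewrite permK -ltnNge.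
by move=> l ltl; rewrite !mnmDE !mnm1E !ne_later ?leqnn.
Qed.

Lemma drl_lt_compensating_var (P : pred 'I_N) (m m' : 'X_{1..N}) (t : 'I_N) :
  (\sum_(k | P k) m k = \sum_(k | P k) m' k)%N -> P (s t) -> (m (s t) < m' (s t))%N ->
  (forall l : 'I_N, (t < l)%N -> m' (s l) = m (s l)) ->
  exists k, [/\ P k, (0 < m k)%N & ((s^-1)%g k < t)%N].
Proof.
move=> eqsum Pt ltt eq_after; have [k Pk ltk] := eq_sum_nat_exists_gt eqsum Pt ltt.
exists k; split=> //; first exact: leq_ltn_trans ltk.
case: (ltngtP (s^-1 k)%g t) => // [lt_tk|/val_inj eq_kt].
  by move: ltk; rewrite -(permKV s k) eq_after // ltnn.
by move: ltk; rewrite -(permKV s k) eq_kt ltnNge ltnW.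
Qed.

End DegRevLex.

Section MatrixEntries.

Variable n : nat.
Implicit Types (i j : 'I_n.+1) (k : 'I_(nvars n)).

Definition vrow k : 'I_n.+1 := (val (enum_val k)).1.
Definition vcol k : 'I_n.+1 := (val (enum_val k)).2.

Lemma vrow_lt_vcol k : (vrow k < vcol k)%N.
Proof. exact: valP (enum_val k). Qed.

Lemma var_inj k k' : vrow k = vrow k' -> vcol k = vcol k' -> k = k'.
Proof.
rewrite /vrow /vcol => eq_row eq_col; apply/enum_val_inj/val_inj.
by rewrite [val _]surjective_pairing [RHS]surjective_pairing eq_row eq_col.
Qed.

Lemma exists_var i j : (i < j)%N -> exists k, vrow k = i /\ vcol k = j.
Proof.
move=> ltij; exists (enum_rank (exist _ (i, j) ltij : VarIdx n)).
by rewrite /vrow /vcol enum_rankK.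
Qed.

Lemma Xent_var k i j : vrow k = i -> vcol k = j -> Xent i j = 'X_k.
Proof.
move=> <- <-; rewrite /Xent /vrow /vcol -surjective_pairing valK.
by rewrite /xvar enum_valK.
Qed.

Lemma Xent_eq0 i j : ~~ (i < j)%N -> Xent i j = 0.
Proof. by move=> geij; rewrite /Xent insubN. Qed.

Lemma minor2_swap_rows i1 i2 j1 j2 : minor2 i2 i1 j1 j2 = - minor2 i1 i2 j1 j2.
Proof. by rewrite /minor2 opprB [Xent i2 j1 * _]mulrC [Xent i2 j2 * _]mulrC. Qed.

Lemma minor2_swap_cols i1 i2 j1 j2 : minor2 i1 i2 j2 j1 = - minor2 i1 i2 j1 j2.
Proof. by rewrite /minor2 opprB. Qed.

Lemma is_minor2_up_to_sign i1 i2 j1 j2 : i1 != i2 -> j1 != j2 ->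
  exists2 g, is_minor2 g & g = minor2 i1 i2 j1 j2 \/ g = - minor2 i1 i2 j1 j2.
Proof.
rewrite !neq_ltn => /orP[lt12|lt21] /orP[ltj12|ltj21].
- by exists (minor2 i1 i2 j1 j2); [exists i1, i2, j1, j2 | left].
- by exists (minor2 i1 i2 j2 j1); [exists i1, i2, j2, j1 | right; rewrite minor2_swap_cols].
- by exists (minor2 i2 i1 j1 j2); [exists i2, i1, j1, j2 | right; rewrite minor2_swap_rows].
- exists (minor2 i2 i1 j2 j1); first by exists i2, i1, j2, j1.
  by left; rewrite minor2_swap_rows minor2_swap_cols opprK.
Qed.

End MatrixEntries.

Section ToricMap.

Variable n : nat.
Implicit Types (i j : 'I_n.+1) (k : 'I_(nvars n)).

(* The target ring has variables y_i = 'X_(lshift i) and z_j = 'X_(rshift j),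
   and [toric] sends x_ij to y_i z_j. *)
Definition nyz := (n.+1 + n.+1)%N.

Definition mnm_yz i j : 'X_{1..nyz} := (U_(lshift n.+1 i) + U_(rshift n.+1 j))%MM.

Definition toric_mnm (m : 'X_{1..nvars n}) : 'X_{1..nyz} :=
  (\sum_(k < nvars n) mnm_yz (vrow k) (vcol k) *+ m k)%MM.

Definition toric : {rmorphism Rpoly n -> {mpoly Cfield[nyz]}} :=
  mmap (@mpolyC _ Cfield) (fun k => 'X_[mnm_yz (vrow k) (vcol k)]).

Lemma toric_Xent i j : (i < j)%N -> toric (Xent i j) = 'X_[mnm_yz i j].
Proof.
case/exists_var=> k [<- <-].
by rewrite (Xent_var (erefl _) (erefl _)) [LHS]mmapX mmap1U.
Qed.

Lemma mcoeff_toric (f : Rpoly n) K :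
  (toric f)@_K = \sum_(m <- msupp f) f@_m * (toric_mnm m == K)%:R.
Proof.
rewrite /toric /= /mmap raddf_sum; apply: eq_bigr => m _.
by rewrite /mmap1 mprodXnE /= mcoeffCM mcoeffX.
Qed.

Lemma toric_mnm_row m i : toric_mnm m (lshift n.+1 i) = (\sum_(k | vrow k == i) m k)%N.
Proof.
rewrite /toric_mnm mnm_sumE [RHS]big_mkcond; apply: eq_bigr => k _.
rewrite mulmnE /mnm_yz mnmDE !mnm1E eq_lshift eq_rlshift addn0.
by case: (vrow k == i); rewrite ?mul1n.
Qed.

Lemma toric_mnm_col m j : toric_mnm m (rshift n.+1 j) = (\sum_(k | vcol k == j) m k)%N.
Proof.
rewrite /toric_mnm mnm_sumE [RHS]big_mkcond; apply: eq_bigr => k _.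
rewrite mulmnE /mnm_yz mnmDE !mnm1E eq_rshift eq_lrshift add0n.
by case: (vcol k == j); rewrite ?mul1n.
Qed.

Lemma mdeg_toric_mnm m : mdeg (toric_mnm m) = (2 * mdeg m)%N.
Proof.
rewrite mdeg_sum mdegE big_distrr; apply: eq_bigr => k _.
by rewrite mdegMn /mnm_yz mdegD !mdeg1.
Qed.

Definition yz_separated (K : 'X_{1..nyz}) : bool :=
  [forall i, forall j,
     (0 < K (lshift n.+1 i))%N ==> (0 < K (rshift n.+1 j))%N ==> (i < j)%N].

Lemma yz_separatedP K i j : yz_separated K ->
  (0 < K (lshift n.+1 i))%N -> (0 < K (rshift n.+1 j))%N -> (i < j)%N.
Proof. by move=> /forallP/(_ i)/forallP/(_ j)/implyP H /H/implyP. Qed.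

Lemma toric_minor2 i1 i2 j1 j2 : (i1 < i2)%N -> (j1 < j2)%N -> (i2 < j1)%N ->
  toric (minor2 i1 i2 j1 j2) = 0.
Proof.
move=> lti ltj lt21; have lt11 := ltn_trans lti lt21; have lt22 := ltn_trans lt21 ltj.
rewrite rmorphB !rmorphM !toric_Xent ?(ltn_trans lt11 ltj) // -!mpolyXD /mnm_yz.
apply/eqP; rewrite subr_eq0; apply/eqP; congr 'X_[_].
by rewrite Monoid.mulmACA [RHS]Monoid.mulmACA; congr (_ + _)%MM; apply: addmC.
Qed.

Lemma mcoeff_toric_minor2 (p : Rpoly n) i1 i2 j1 j2 K :
  yz_separated K -> (i1 < i2)%N -> (j1 < j2)%N ->
  (toric p * toric (minor2 i1 i2 j1 j2))@_K = 0.
Proof.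
move=> sepK lti ltj; case: (ltnP i2 j1) => [lt21|le12].
  by rewrite toric_minor2 // mulr0 mcoeff0.
rewrite /minor2 [Xent i2 j1]Xent_eq0 -?leqNgt // mulr0 subr0 rmorphM mulrA.
case: (boolP (i1 < j1)%N) => [lt11|/Xent_eq0->]; last first.
  by rewrite rmorph0 mulr0 mul0r mcoeff0.
case: (boolP (i2 < j2)%N) => [lt22|/Xent_eq0->]; last first.
  by rewrite rmorph0 mulr0 mcoeff0.
rewrite !toric_Xent // -mulrA -mpolyXD mcoeffMX_eq0 //; apply/negP => le.
have yK : (U_(lshift n.+1 i2) <= K)%MM.
  by apply: lepm_trans le; apply: lepm_trans (lem_addl _ _); apply: lem_addr.
have zK : (U_(rshift n.+1 j1) <= K)%MM.
  by apply: lepm_trans le; apply: lepm_trans (lem_addr _ _); apply: lem_addl.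
move: yK zK; rewrite !lep1mP -!lt0n => /(yz_separatedP sepK) sep /sep.
by rewrite ltnNge le12.
Qed.

Lemma mcoeff_toric_ideal (f : Rpoly n) K :
  yz_separated K -> ideal_gen (@is_minor2 n) f -> (toric f)@_K = 0.
Proof.
move=> sepK [q [q_minors ->]]; rewrite rmorph_sum raddf_sum big_seq big1 // => c qc.
have [i1 [i2 [j1 [j2 [lti ltj ->]]]]] := q_minors c qc.
by rewrite rmorphM; apply: mcoeff_toric_minor2.
Qed.

End ToricMap.

Section MinorLeads.

Variables (n : nat) (s : {perm 'I_(nvars n)}).
Implicit Types (mf : 'X_{1..nvars n}) (k v : 'I_(nvars n)).

Definition minor_lead_divides mf : Prop :=
  exists g mg, [/\ is_minor2 g, is_lead_mon s g mg & (mg <= mf)%MM].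

Lemma toric_mnm_row_gt0 mf k :
  (0 < mf k)%N -> (0 < toric_mnm mf (lshift n.+1 (vrow k)))%N.
Proof. by move=> pos; rewrite toric_mnm_row; apply/sum_nat_gt0P; exists k. Qed.

Lemma toric_mnm_col_gt0 mf k :
  (0 < mf k)%N -> (0 < toric_mnm mf (rshift n.+1 (vcol k)))%N.
Proof. by move=> pos; rewrite toric_mnm_col; apply/sum_nat_gt0P; exists k. Qed.

Lemma minor_lead_divides_unseparated mf :
  ~~ yz_separated (toric_mnm mf) -> minor_lead_divides mf.
Proof.
case/forallPn=> i /forallPn[j]; rewrite !negb_imply => /and3P[].
rewrite toric_mnm_row toric_mnm_col => /sum_nat_gt0P[k1 /eqP row1 pos1].
move=> /sum_nat_gt0P[k2 /eqP col2 pos2] geij.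
have lt_row : (vrow k2 < i)%N by apply: leq_trans (vrow_lt_vcol k2) _; rewrite col2 leqNgt.
have lt_col : (j < vcol k1)%N by apply: leq_ltn_trans (vrow_lt_vcol k1); rewrite row1 leqNgt.
exists (minor2 (vrow k2) i j (vcol k1)), (U_(k2) + U_(k1))%MM; split.
- by exists (vrow k2), i, j, (vcol k1).
- rewrite /minor2 [Xent i j]Xent_eq0 // mulr0 subr0.
  rewrite (Xent_var (erefl _) col2) (Xent_var row1 (erefl _)) -mpolyXD.
  exact: is_lead_monX.
- by apply: lem_addU => //; apply: contraTneq lt_row => ->; rewrite row1 ltnn.
Qed.

Lemma minor_lead_divides_exchange mf v k1 k2 :
  yz_separated (toric_mnm mf) -> vrow k1 = vrow v -> vcol k2 = vcol v ->
  ((s^-1)%g k1 < (s^-1)%g v)%N -> ((s^-1)%g k2 < (s^-1)%g v)%N ->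
  (0 < mf k1)%N -> (0 < mf k2)%N -> minor_lead_divides mf.
Proof.
move=> sep row1 col2 before1 before2 pos1 pos2.
have ne1 : k1 != v by apply: contraTneq before1 => ->; rewrite ltnn.
have ne2 : k2 != v by apply: contraTneq before2 => ->; rewrite ltnn.
have col1 : vcol k1 != vcol v by apply: contra_neq ne1; apply: var_inj.
have row2 : vrow k2 != vrow v by apply: contra_neq ne2 => /var_inj; apply.
have [w [roww colw]] : exists w, vrow w = vrow k2 /\ vcol w = vcol k1.
  apply/exists_var/(yz_separatedP sep).
    exact: toric_mnm_row_gt0 pos2.
  exact: toric_mnm_col_gt0 pos1.
have wv : w != v by apply: contra_neq row2 => <-.
have wk1 : w != k1 by apply: contra_neq row2 => eq_w; rewrite -roww eq_w.
have wk2 : w != k2 by apply: contra_neq col1 => eq_w; rewrite -colw eq_w.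
have lt_exchange : drl_lt s (U_(v) + U_(w))%MM (U_(k1) + U_(k2))%MM.
  case: (leqP (s^-1 w)%g (s^-1 v)%g) => [le_w|lt_w].
    by apply: drl_lt_exchange; rewrite ?(ltnW before1) ?(ltnW before2).
  have le_w k : ((s^-1)%g k < (s^-1)%g v)%N -> ((s^-1)%g k <= (s^-1)%g w)%N.
    by move=> lt_k; rewrite ltnW // (ltn_trans lt_k lt_w).
  by rewrite addmC; apply: drl_lt_exchange; rewrite 1?eq_sym ?(ltnW lt_w) ?le_w.
have minorE : minor2 (vrow v) (vrow k2) (vcol k1) (vcol v) =
               'X_[U_(k1) + U_(k2)] - 'X_[U_(v) + U_(w)].
  rewrite /minor2 (Xent_var row1 (erefl _)) (Xent_var (erefl _) col2).
  by rewrite (Xent_var (erefl _) (erefl _)) (Xent_var roww colw) -!mpolyXD.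
rewrite eq_sym in row2; have [g g_minor g_eq] := is_minor2_up_to_sign row2 col1.
exists g, (U_(k1) + U_(k2))%MM; split=> //.
  have := is_lead_monXB Cfield lt_exchange; rewrite -minorE.
  by case: g_eq => ->; [|apply: is_lead_monN].
by apply: lem_addU => //; apply: contra_neq row2 => eq_k; rewrite -row1 eq_k.
Qed.

Lemma minor_lead_divides_separated mf m' :
  yz_separated (toric_mnm mf) -> toric_mnm m' = toric_mnm mf -> drl_lt s m' mf ->
  minor_lead_divides mf.
Proof.
move=> sep eq_toric [lt_deg|[_ [t [lt_t eq_after]]]].
  by move: lt_deg; rewrite -(ltn_pmul2l (isT : 0 < 2)%N) -!mdeg_toric_mnm eq_toric ltnn.
have [k1 [/eqP row1 pos1 before1]] :
    exists k, [/\ vrow k == vrow (s t), (0 < mf k)%N & ((s^-1)%g k < t)%N].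
  by apply: drl_lt_compensating_var lt_t eq_after => //; rewrite -!toric_mnm_row eq_toric.
have [k2 [/eqP col2 pos2 before2]] :
    exists k, [/\ vcol k == vcol (s t), (0 < mf k)%N & ((s^-1)%g k < t)%N].
  by apply: drl_lt_compensating_var lt_t eq_after => //; rewrite -!toric_mnm_col eq_toric.
by apply: (minor_lead_divides_exchange (v := s t)) sep row1 col2 _ _ pos1 pos2;
  rewrite permK.
Qed.

End MinorLeads.

Lemma exists_toric_mate n (f : Rpoly n) mf :
  ideal_gen (@is_minor2 n) f -> mf \in msupp f -> yz_separated (toric_mnm mf) ->
  exists m', [/\ m' \in msupp f, m' != mf & toric_mnm m' = toric_mnm mf].
Proof.
move=> f_ideal f_mf sep.
case: (boolP (has (fun m' => (m' != mf) && (toric_mnm m' == toric_mnm mf)) (msupp f))).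
  by case/hasP=> m' f_m' /andP[ne /eqP eq]; exists m'.
move/hasPn=> no_mate; have := mcoeff_toric_ideal sep f_ideal.
rewrite mcoeff_toric (bigD1_seq mf) ?msupp_uniq // eqxx mulr1 big1_seq ?Monoid.mulm1.
  by move=> coef0; move: f_mf; rewrite mcoeff_msupp coef0 eqxx.
move=> m /andP[ne f_m]; move: (no_mate m f_m).
by rewrite ne /= => /negbTE->; rewrite mulr0.
Qed.

Theorem corollary6p5 (n : nat) (hn : (1 <= n)%N) (s : {perm 'I_(nvars n)}) :
  groebner_basis s (@is_minor2 n) (ideal_gen (@is_minor2 n)).
Proof.
split=> [g g_minor|f f_ideal f_nz].
  by exists [:: (1, g)]; split=> [c|]; rewrite ?mem_seq1 ?big_seq1 ?mul1r // => /eqP->.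
have [mf [f_mf lead_f]] := exists_lead_mon s f_nz.
suff [g [mg [g_minor lead_g le_mg]]] : minor_lead_divides s mf by exists g, mf, mg.
case: (boolP (yz_separated (toric_mnm mf))) => [sep|/minor_lead_divides_unseparated//].
have [m' [f_m' ne_m' eq_toric]] := exists_toric_mate f_ideal f_mf sep.
exact: minor_lead_divides_separated sep eq_toric (lead_f m' f_m' ne_m').
Qed.
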